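(* Let $1\le r\le m\le n$ and $k\ge 1$. Let $Z_1\subseteq\mathcal Z^{m,n}_{r,k}$ be the closed subvariety of points at which all $x^{(0)}_{i,j}$ ($1\le i\le m$, $1\le j\le n$) vanish. If $k\le r$, then $Z_1$ is exactly the linear subspace $\{x^{(0)}_{i,j}=0 \ \forall i,j\}\cong\mathbf A^{mn(k-1)}$ (the coordinates of degrees $1,\dots,k-1$ being arbitrary). If $k>r$, then $Z_1\cong \mathcal Z^{m,n}_{r,k-r}\times\mathbf A^{mn(r-1)}$, via the map sending a point of $Z_1$ to the pair consisting of its coordinates $x^{(l)}_{i,j}$ with $1\le l\le k-r$ (regarded as the coordinates $x^{(l-1)}_{i,j}$ of a point of $\mathcal Z^{m,n}_{r,k-r}$) and its coordinates $x^{(l)}_{i,j}$ with $k-r<l\le k-1$.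
   Context: Let $F$ be an algebraically closed field. For integers $1\le r\le m\le n$ and $k\ge 1$, let $S=F[x^{(l)}_{i,j}:1\le i\le m,\ 1\le j\le n,\ 0\le l\le k-1]$, the coordinate ring of $\mathbf A^{mnk}_F$, and let $X(t)$ be the $m\times n$ matrix over $S[t]/(t^k)$ with $(i,j)$ entry $x_{i,j}(t)=\sum_{l=0}^{k-1}x^{(l)}_{i,j}t^l$. Every element of $S[t]/(t^k)$ is uniquely $\sum_{l=0}^{k-1}c_lt^l$ with $c_l\in S$ (its coefficient of $t^l$). $\mathcal I^{m,n}_{r,k}\subseteq S$ is the ideal generated by the coefficients of $t^l$, $0\le l\le k-1$, of all $r\times r$ minors of $X(t)$, and $\mathcal Z^{m,n}_{r,k}\subseteq\mathbf A^{mnk}_F$ is its zero set. The variable $x^{(l)}_{i,j}$ is said to have degree $l$. *)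

From HB Require Import structures.
From mathcomp Require Import all_boot all_order all_algebra.
Set Implicit Arguments. Unset Strict Implicit. Unset Printing Implicit Defensive.
Import GRing.Theory.
Local Open Scope ring_scope.

(* A point of A^{mnk}_F is x : 'I_k -> 'M[F]_(m,n), with x l i j = x^{(l)}_{i,j}. *)

Definition Xpoly (F : fieldType) (m n k : nat) (x : 'I_k -> 'M[F]_(m,n))
  : 'M[{poly F}]_(m,n) :=
  \matrix_(i < m, j < n) \sum_(l < k) (x l i j) *: 'X^l.

(* x lies in Z^{m,n}_{r,k}: for every r x r minor of X(t) (rows f, columns g),
   the coefficients of t^l, l < k, vanish (i.e. the minor is 0 in F[t]/(t^k)). *)
Definition inZ (F : fieldType) (m n r k : nat) (x : 'I_k -> 'M[F]_(m,n)) : Prop :=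
  forall (f : 'I_r -> 'I_m) (g : 'I_r -> 'I_n) (l : nat), (l < k)%N ->
    (\det (mxsub f g (Xpoly x)))`_l = 0.

Definition deg0_zero (F : fieldType) (m n k : nat) (x : 'I_k -> 'M[F]_(m,n)) : Prop :=
  forall l : 'I_k, nat_of_ord l = 0%N -> x l = 0.

Definition inZ1 (F : fieldType) (m n r k : nat) (x : 'I_k -> 'M[F]_(m,n)) : Prop :=
  inZ r x /\ deg0_zero x.

Definition ext_pt (F : fieldType) (m n k : nat) (x : 'I_k -> 'M[F]_(m,n)) (l : nat)
  : 'M[F]_(m,n) :=
  if insub l is Some i then x i else 0.

Definition shift_pt (F : fieldType) (m n k r : nat) (x : 'I_k -> 'M[F]_(m,n))
  : 'I_(k - r) -> 'M[F]_(m,n) :=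
  fun l => ext_pt x (nat_of_ord l).+1.
Arguments shift_pt {F m n k} r x _.

(* On Z_1 every entry of X(t) is divisible by t, so each r x r minor of X(t) is
   t^r times the corresponding minor of X(t)/t, whose coefficients are the
   shifted coordinates x^{(l+1)}.  Hence the coefficients of t^l, l < r, of the
   minors vanish automatically, and those of t^l, r <= l < k, are the
   coefficients of t^(l-r) of the minors of the shifted point; modulo t^(k-r)
   only the coordinates of degree at most k-r matter, as a determinant is a
   polynomial in the entries. *)

From HB Require Import structures.
From mathcomp Require Import all_boot all_order all_algebra.
From mathcomp Require Import zify.

Set Implicit Arguments.
Unset Strict Implicit.
Unset Printing Implicit Defensive.
Local Open Scope ring_scope.
Import GRing.Theory.

Section EqModXn.

Variables (R : nzRingType) (N : nat).

Definition eqmodXn (p q : {poly R}) := forall i, (i < N)%N -> p`_i = q`_i.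

Lemma eqmodXnD p p' q q' :
  eqmodXn p p' -> eqmodXn q q' -> eqmodXn (p + q) (p' + q').
Proof. by move=> hp hq i hi; rewrite !coefD hp ?hq. Qed.

Lemma eqmodXnM p p' q q' :
  eqmodXn p p' -> eqmodXn q q' -> eqmodXn (p * q) (p' * q').
Proof.
move=> hp hq i hi; rewrite !coefM; apply: eq_bigr => j _.
by rewrite hp ?hq //; have := ltn_ord j; lia.
Qed.

Lemma eqmodXn_det r (A B : 'M[{poly R}]_r) :
  (forall i j, eqmodXn (A i j) (B i j)) -> eqmodXn (\det A) (\det B).
Proof.
move=> hAB; apply: big_ind2 => [//|? ? ? ?|s _]; first exact: eqmodXnD.
apply: eqmodXnM => [//|]; apply: big_ind2 => [//|? ? ? ?|i _ //].
exact: eqmodXnM.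
Qed.

End EqModXn.

Section Coordinates.

Variables (F : fieldType) (m n k : nat) (x : 'I_k -> 'M[F]_(m, n)).

Lemma ext_ptE (l : 'I_k) : ext_pt x l = x l.
Proof. by rewrite /ext_pt valK. Qed.

Lemma coef_Xpoly i j c :
  (Xpoly x i j)`_c = if (c < k)%N then ext_pt x c i j else 0.
Proof.
rewrite mxE (eq_bigr (fun l : 'I_k => ext_pt x l i j *: 'X^l)).
  by rewrite -(poly_def k (fun l => ext_pt x l i j)) coef_poly.
by move=> l _; rewrite ext_ptE.
Qed.

End Coordinates.

Section Minors.

Variables (F : fieldType) (m n k : nat) (x : 'I_k -> 'M[F]_(m, n)).

Lemma coef_Xpoly_shift_pt s i j c :
  (Xpoly (shift_pt s x) i j)`_c =
    if (c < k - s)%N then ext_pt x c.+1 i j else 0.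
Proof. by rewrite coef_Xpoly; case: ifP => // ckr; rewrite {1}/ext_pt insubT. Qed.

Lemma Xpoly_deg0_zero : deg0_zero x -> Xpoly x = 'X *: Xpoly (shift_pt 1 x).
Proof.
move=> x0; apply/matrixP => i j; apply/polyP => -[|c].
  rewrite coef_Xpoly !mxE coefXM /ext_pt.
  by case: insubP => [l _ /x0 ->|_]; rewrite ?mxE; case: ifP.
rewrite coef_Xpoly mxE coefXM coef_Xpoly_shift_pt /=.
by have -> : (c.+1 < k)%N = (c < k - 1)%N by lia.
Qed.

Lemma coef_det_minor_deg0_zero r (f : 'I_r -> 'I_m) (g : 'I_r -> 'I_n) l :
  deg0_zero x -> (1 <= r)%N -> (l < k)%N ->
  (\det (mxsub f g (Xpoly x)))`_l =
    if (l < r)%N then 0 else (\det (mxsub f g (Xpoly (shift_pt r x))))`_(l - r).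
Proof.
move=> x0 r_gt0 lk.
have -> : mxsub f g (Xpoly x) = 'X *: mxsub f g (Xpoly (shift_pt 1 x)).
  by rewrite (Xpoly_deg0_zero x0); apply/matrixP => i j; rewrite !mxE.
rewrite detZ coefXnM; case: ifP => // /negbT; rewrite -leqNgt => rl.
suff shift1_r : eqmodXn (k - r) (\det (mxsub f g (Xpoly (shift_pt 1 x))))
                                (\det (mxsub f g (Xpoly (shift_pt r x)))).
  by apply: shift1_r; lia.
apply: eqmodXn_det => i j c ckr.
rewrite ![mxsub _ _ _ _ _]mxE !coef_Xpoly_shift_pt ckr.
by have -> : (c < k - 1)%N by lia.
Qed.

Lemma inZ_shift_pt r : (1 <= r)%N -> deg0_zero x ->
  inZ r x <-> inZ r (shift_pt r x).
Proof.
move=> r_gt0 x0; split=> xZ f g l lkr.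
  have lrk : (l + r < k)%N by lia.
  by have := xZ f g _ lrk; rewrite coef_det_minor_deg0_zero // ltnNge leq_addl addnK.
rewrite coef_det_minor_deg0_zero //; case: ifP => // /negbT; rewrite -leqNgt => rl.
by apply: xZ; lia.
Qed.

End Minors.

Theorem lemma2p1 (F : closedFieldType) (m n r k : nat)
  (hr : (1 <= r)%N) (hrm : (r <= m)%N) (hmn : (m <= n)%N) (hk : (1 <= k)%N) :
  ((k <= r)%N ->
     forall x : 'I_k -> 'M[F]_(m, n), inZ1 r x <-> deg0_zero x) /\
  ((r < k)%N ->
     forall x : 'I_k -> 'M[F]_(m, n),
       inZ1 r x <-> (deg0_zero x /\ inZ r (shift_pt r x))).
Proof.
split=> [kr | _] x.
  split=> [[] // | x0]; split=> //.
  by apply: (inZ_shift_pt hr x0).2 => f g l; lia.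
split=> [[xZ x0] | [x0 sZ]]; split=> //.
  exact: (inZ_shift_pt hr x0).1 xZ.
exact: (inZ_shift_pt hr x0).2 sZ.
Qed.
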